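(* Let $\gamma\geq0$ and $G=(V,E,\omega)\in\mathcal C_\gamma$. Let $S\subset V$ be nonempty and define $\tau_\kappa(S):=\frac12\|L\chi_S\|_{\mathcal V,\infty}^{-1}$. Let $\tau\geq0$ and let $S^1:=\{i\in V:(e^{-\tau L}\chi_S)_i\geq\frac12\}$ be the first set in the OKMBO evolution of $S^0=S$. If $0\leq\tau<\tau_\kappa(S)$, then $S^1=S$.
   Context: $\mathcal{G}$ is the set of finite, simple, connected, undirected, edge-weighted graphs $G=(V,E,\omega)$ with $V=\{1,\dots,n\}$, $n\geq2$, weights $\omega_{ij}=\omega_{ji}>0$ on edges, $0$ otherwise. $d_i=\sum_j\omega_{ij}$. $\mathcal V$: functions $V\to\mathbb R$; $\|u\|_{\mathcal V,\infty}=\max_i|u_i|$; $\chi_S$ indicator of $S$. Fixed $r\in[0,1]$: $(\Delta u)_i=d_i^{-r}\sum_j\omega_{ij}(u_i-u_j)$, $\mathcal M(u)=\sum_id_i^ru_i$, $\mathrm{vol}(V)=\sum_id_i^r$, $\mathcal A(u)=\frac{\mathcal M(u)}{\mathrm{vol}(V)}\chi_V$. For $u\in\mathcal V$ let $\varphi$ be the unique solution of $\Delta\varphi=u-\mathcal A(u)$, $\mathcal M(\varphi)=0$, and $Lu:=\Delta u+\gamma\varphi$; $e^{-\tau L}$ is the operator exponential (so $e^{-\tau L}u_0$ is the value at time $\tau$ of the solution of $du/dt=-Lu$, $u(0)=u_0$). Equilibrium measure $\nu^S$ ($S\subsetneq V$): unique $\nu$ with $(\Delta\nu)_i=1$ on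 $S$, $\nu=0$ off $S$. $f^j:=\nu^{V\setminus\{j\}}-\mathcal A(\nu^{V\setminus\{j\}})$. $\mathcal C^0=\{G\in\mathcal G:\forall j\ \forall i\neq j:\ \omega_{ij}>0\text{ or }f^j_i\geq0\}$; for $\gamma>0$, $\mathcal C_\gamma=\{G\in\mathcal C^0:\forall j\ \forall i\neq j:\ \omega_{ij}=0\text{ or }d_i^{-r}\omega_{ij}+\gamma\frac{d_j^r}{\mathrm{vol}(V)}f^j_i>0\}$; $\mathcal C_0:=\mathcal G$. *)

From HB Require Import structures.
From mathcomp Require Import all_boot all_order all_algebra.
From mathcomp Require Import all_classical all_reals.
From mathcomp Require Import all_analysis.
Import numFieldNormedType.Exports.
Set Implicit Arguments. Unset Strict Implicit. Unset Printing Implicit Defensive.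
Import Order.TTheory GRing.Theory Num.Theory.
Local Open Scope ring_scope.

Section Graph.
Variables (R : realType) (n : nat).
Implicit Types (w : 'I_n -> 'I_n -> R) (u : 'I_n -> R).

Definition is_graph w : Prop :=
  (2 <= n)%N /\
  (forall i j, w i j = w j i) /\
  (forall i j, 0 <= w i j) /\
  (forall i, w i i = 0) /\
  (forall i j, connect [rel a b | 0 < w a b] i j).

Definition deg w i : R := \sum_j w i j.

Variable r : R.

Definition lap w u : 'I_n -> R :=
  fun i => (deg w i) `^ (- r) * \sum_j w i j * (u i - u j).

Definition mass w u : R := \sum_i (deg w i) `^ r * u i.
Definition vol w : R := \sum_i (deg w i) `^ r.
Definition avg w u : 'I_n -> R := fun _ => mass w u / vol w.

Definition phi w u : 'I_n -> R :=
  xget (fun _ => 0)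
    [set p | lap w p = (fun i => u i - avg w u i) /\ mass w p = 0]%classic.

Variable gamma : R.

Definition Lop w u : 'I_n -> R := fun i => lap w u i + gamma * phi w u i.

Definition eqmeas w (S : {set 'I_n}) : 'I_n -> R :=
  xget (fun _ => 0)
    [set nu | (forall i, i \in S -> lap w nu i = 1) /\
              (forall i, i \notin S -> nu i = 0)]%classic.

Definition fj w (j : 'I_n) : 'I_n -> R :=
  fun i => eqmeas w (~: [set j]) i - avg w (eqmeas w (~: [set j])) i.

Definition inC0 w : Prop :=
  forall j i, i != j -> 0 < w i j \/ 0 <= fj w j i.

Definition inC w : Prop :=
  if gamma == 0 then True
  else inC0 w /\
       forall j i, i != j ->
         w i j = 0 \/
         0 < (deg w i) `^ (- r) * w i j
             + gamma * ((deg w j) `^ r / vol w) * fj w j i.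

Definition chi (S : {set 'I_n}) : 'I_n -> R := fun i => if i \in S then 1 else 0.

Definition supnorm u : R := \big[Num.max/0]_i `|u i|.

Definition tau_kappa w (S : {set 'I_n}) : \bar R :=
  if supnorm (Lop w (chi S)) == 0 then +oo%E
  else ((2 * supnorm (Lop w (chi S)))^-1)%:E.

Definition expL w (t : R) u : 'I_n -> R :=
  fun i => limn (fun N : nat => \sum_(k < N) ((- t) ^+ k / (k`!)%:R) * iter k (Lop w) u i).

End Graph.

From HB Require Import structures.
From mathcomp Require Import all_boot all_order all_algebra.
From mathcomp Require Import all_classical all_reals.
From mathcomp Require Import all_analysis.
From mathcomp Require Import ring lra.
Import numFieldNormedType.Exports.
Import Order.TTheory GRing.Theory Num.Theory.
Set Implicit Arguments. Unset Strict Implicit. Unset Printing Implicit Defensive.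
Local Open Scope classical_set_scope.
Local Open Scope ring_scope.

(* Write [L u = M u] with [M i j = (L e_j)_i].  Since [phi] kills constants, [M] has zero row
   sums; since [phi e_j = -(d_j^r / vol(V)) f^j], its off-diagonal entries are
   [-(d_i^{-r} w_ij + gamma d_j^r / vol(V) f^j_i)], and membership in [C_gamma] says exactly
   that they are [<= 0].  Then [e^{-tM} = e^{-ct} e^{t(cI - M)}] is entrywise nonnegative and
   fixes constants, so it contracts the sup norm; by the mean value theorem
   [|e^{-tL} chi_S - chi_S| <= t ||L chi_S||_inf < 1/2] for [t < tau_kappa(S)], and
   thresholding at [1/2] gives back [S]. *)

Lemma ler_psum_term (R : numDomainType) (I : finType) (F : I -> R) j :
  (forall i, 0 <= F i) -> F j <= \sum_i F i.
Proof. by move=> F_ge0; rewrite (bigD1 j) //= lerDl sumr_ge0. Qed.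

Lemma sumr_delta (R : nzRingType) (I : finType) (F : I -> R) k :
  \sum_i F i * (i == k)%:R = F k.
Proof.
by rewrite (bigD1 k) //= eqxx mulr1 big1 ?addr0 // => i /negbTE ->; rewrite mulr0.
Qed.

Lemma cvg_lincomb (R : realType) (J : eqType) (s : seq J) (c : J -> R)
    (u : J -> nat -> R) (l : J -> R) :
  (forall j, u j N @[N --> \oo] --> l j) ->
  (\sum_(j <- s) c j * u j N) @[N --> \oo] --> \sum_(j <- s) c j * l j.
Proof.
move=> ul; elim: s => [|j s IH].
  by under eq_fun do rewrite big_nil; rewrite big_nil; exact: cvg_cst.
under eq_fun do rewrite big_cons; rewrite big_cons.
by apply: cvgD => //; exact: cvgMl_tmp.
Qed.

Section MatrixExponential.
Variables (R : realType) (n : nat).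
Implicit Types (a : 'I_n -> 'I_n -> R) (x : 'I_n -> R).

Definition mxv a x : 'I_n -> R := fun i => \sum_j a i j * x j.

Definition l1norm x : R := \sum_j `|x j|.

Definition mx_l1norm a : R := \sum_i \sum_j `|a i j|.

Lemma l1norm_ge0 x : 0 <= l1norm x.
Proof. exact: sumr_ge0. Qed.

Lemma mx_l1norm_ge0 a : 0 <= mx_l1norm a.
Proof. by apply: sumr_ge0 => i _; exact: sumr_ge0. Qed.

Lemma ler_mx_l1norm a i j : `|a i j| <= mx_l1norm a.
Proof.
have row_le : `|a i j| <= \sum_l `|a i l| by apply: (ler_psum_term (F := fun l => `|a i l|)).
apply: le_trans row_le _.
by apply: (ler_psum_term (F := fun k => \sum_l `|a k l|)) => k; exact: sumr_ge0.
Qed.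

Lemma l1norm_mxv a x : l1norm (mxv a x) <= mx_l1norm a * l1norm x.
Proof.
rewrite /l1norm /mx_l1norm mulr_suml; apply: ler_sum => i _.
apply: le_trans (ler_norm_sum _ _ _) _; rewrite mulr_suml; apply: ler_sum => j _.
by rewrite normrM ler_wpM2l // (ler_psum_term (F := fun j => `|x j|)).
Qed.

Lemma iter_mxv_bound a x k i : `|iter k (mxv a) x i| <= mx_l1norm a ^+ k * l1norm x.
Proof.
apply: le_trans (ler_psum_term (F := fun i => `|iter k (mxv a) x i|) i _) _ => //.
elim: k => [|k IH]; first by rewrite expr0 mul1r.
rewrite iterS; apply: le_trans (l1norm_mxv _ _) _.
by rewrite exprS -mulrA ler_wpM2l // mx_l1norm_ge0.
Qed.

Lemma iter_mxv_lincomb a (J : finType) (c : J -> R) (f : J -> 'I_n -> R) k i :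
  iter k (mxv a) (fun l => \sum_j c j * f j l) i = \sum_j c j * iter k (mxv a) (f j) i.
Proof.
elim: k i => [//|k IH] i; rewrite !iterS /mxv.
under eq_bigr do rewrite IH mulr_sumr.
rewrite exchange_big /=; apply: eq_bigr => j _.
by rewrite mulr_sumr; apply: eq_bigr => l _; rewrite mulrCA.
Qed.

Lemma iter_mxvN a x k i :
  iter k (mxv (fun l j => - a l j)) x i = (-1) ^+ k * iter k (mxv a) x i.
Proof.
elim: k i => [|k IH] i; first by rewrite expr0 mul1r.
rewrite !iterS /mxv mulr_sumr; apply: eq_bigr => l _.
by rewrite IH exprS; ring.
Qed.

Definition expmv_coef a x i k : R := iter k (mxv a) x i / k`!%:R.

Definition expmv a t x : 'I_n -> R := fun i => limn (pseries (expmv_coef a x i) t).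

Lemma expmv_coef_bound a x i k t :
  `|expmv_coef a x i k * t ^+ k| <= l1norm x * exp_coeff (mx_l1norm a * `|t|) k.
Proof.
rewrite exp_coeffE /expmv_coef !normrM normrX normfV normr_nat exprMn.
have := iter_mxv_bound a x k i.
have : 0 <= `|t| ^+ k / k`!%:R by rewrite divr_ge0 // exprn_ge0.
set A := mx_l1norm a ^+ k; set B := `|t| ^+ k; set F := k`!%:R; set X := `|_|.
by move=> tkF_ge0 X_le; rewrite -!mulrA; nra.
Qed.

Lemma cvg_expmv a x i t : cvgn (pseries (expmv_coef a x i) t).
Proof.
apply: normed_cvg.
apply: (@series_le_cvg _ _ (fun k => l1norm x * exp_coeff (mx_l1norm a * `|t|) k)).
- by move=> k /=; exact: normr_ge0.
- by move=> k; rewrite mulr_ge0 ?l1norm_ge0 // exp_coeff_ge0 // mulr_ge0 // mx_l1norm_ge0.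
- by move=> k /=; exact: expmv_coef_bound.
- have -> : (fun k => l1norm x * exp_coeff (mx_l1norm a * `|t|) k) =
    l1norm x *: exp_coeff (mx_l1norm a * `|t|) by [].
  exact: (@is_cvg_seriesZ _ _ (l1norm x) (is_cvg_series_exp_coeff _)).
Qed.

Lemma expmv_coef_diffs a x i :
  pseries_diffs (expmv_coef a x i) = expmv_coef a (mxv a x) i.
Proof.
apply/funext => k; rewrite /pseries_diffs /expmv_coef iterSr factS natrM.
have k1_neq0 : (k.+1%:R : R) != 0 by rewrite pnatr_eq0.
have kfact_neq0 : ((k`!)%:R : R) != 0 by rewrite pnatr_eq0 -lt0n fact_gt0.
by rewrite invfM mulrCA mulVKf.
Qed.

Lemma is_derive_expmv a x i t :
  is_derive t (1 : R) (fun s => expmv a s x i) (expmv a t (mxv a x) i).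
Proof.
rewrite /expmv -expmv_coef_diffs.
apply: (@pseries_snd_diffs _ _ (`|t| + 1)); rewrite ?expmv_coef_diffs; try exact: cvg_expmv.
by rewrite [X in _ < X]ger0_norm ?ltrDl // addr_ge0.
Qed.

Lemma expmv0 a x i : expmv a 0 x i = x i.
Proof.
rewrite /expmv; apply: norm_lim_near_cst; exists 1%N => // -[//|N] _ /=.
rewrite /pseries /series /= big_nat_recl //= expr0 mulr1 /expmv_coef /= divr1.
by rewrite big1 ?addr0 // => k _; rewrite expr0n /= mulr0.
Qed.

Lemma lim_pseries_lincomb (J : finType) (c : J -> R) (cs : J -> nat -> R) d t :
  (forall k, d k = \sum_j c j * cs j k) -> (forall j, cvgn (pseries (cs j) t)) ->
  limn (pseries d t) = \sum_j c j * limn (pseries (cs j) t).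
Proof.
move=> dE cvg_cs; apply: cvg_lim => //.
have -> : pseries d t = fun N => \sum_j c j * pseries (cs j) t N.
  apply/funext => N; rewrite /pseries /series /=.
  under eq_bigr do rewrite dE mulr_suml.
  rewrite exchange_big; apply: eq_bigr => j _; rewrite mulr_sumr.
  by apply: eq_bigr => k _; rewrite mulrA.
exact: cvg_lincomb.
Qed.

Lemma expmv_lincomb a (J : finType) (c : J -> R) (f : J -> 'I_n -> R) t i :
  expmv a t (fun l => \sum_j c j * f j l) i = \sum_j c j * expmv a t (f j) i.
Proof.
apply: lim_pseries_lincomb => [k|j]; last exact: cvg_expmv.
rewrite /expmv_coef iter_mxv_lincomb mulr_suml.
by apply: eq_bigr => j _; rewrite mulrA.
Qed.

Lemma expmv_lin2 a t (c1 c2 : R) x y i :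
  expmv a t (fun l => c1 * x l + c2 * y l) i = c1 * expmv a t x i + c2 * expmv a t y i.
Proof.
have := expmv_lincomb a (fun b : bool => if b then c1 else c2) (fun b => if b then x else y) t i.
by rewrite big_bool /= => <-; congr expmv; apply/funext => l; rewrite big_bool.
Qed.

Lemma expmv_mxv a t x i : expmv a t (mxv a x) i = mxv a (expmv a t x) i.
Proof.
apply: (@lim_pseries_lincomb _ (a i) (fun l => expmv_coef a x l)) => [k|j]; last first.
  exact: cvg_expmv.
rewrite /expmv_coef -iterSr iterS /mxv mulr_suml.
by apply: eq_bigr => j _; rewrite mulrA.
Qed.

Lemma expmv_ge0 a t x i : 0 <= t -> (forall k l, 0 <= a k l) -> (forall l, 0 <= x l) ->
  0 <= expmv a t x i.
Proof.
move=> t_ge0 a_ge0 x_ge0; apply: limr_ge; first exact: cvg_expmv.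
have iter_ge0 k j : 0 <= iter k (mxv a) x j.
  by elim: k j => [|k IH] j //=; apply: sumr_ge0 => l _; exact: mulr_ge0.
apply: nearW => N; apply: sumr_ge0 => k _.
by rewrite mulr_ge0 ?exprn_ge0 // divr_ge0.
Qed.

Lemma expmv_oppE a t x i :
  limn (fun N => \sum_(k < N) ((- t) ^+ k / (k`!)%:R) * iter k (mxv a) x i) =
  expmv (fun l j => - a l j) t x i.
Proof.
rewrite /expmv; congr (lim (_ @ \oo)); apply/funext => N.
rewrite /pseries /series /= big_mkord.
by apply: eq_bigr => k _; rewrite /expmv_coef iter_mxvN (exprNn t); ring.
Qed.

End MatrixExponential.

Lemma is_derive_expR_scale (R : realType) (c t : R) :
  is_derive t (1 : R) (fun s => expR (c * s)) (expR (c * t) * c).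
Proof.
have dcs : is_derive t (1 : R) (fun s => c * s) c.
  by apply: is_derive_eq (is_deriveZ c (is_derive_id t 1)) _; exact: mulr1.
exact: (is_derive1_comp (f := expR) (is_derive_expR _) dcs).
Qed.

Section LinearODE.
Variables (R : realType) (n : nat) (a : 'I_n -> 'I_n -> R).

Lemma mxv_quad_bound (d : 'I_n -> R) :
  \sum_j d j * mxv a d j <= n%:R * mx_l1norm a * \sum_j d j ^+ 2.
Proof.
have step j l : d j * (a j l * d l) <= mx_l1norm a * (d j ^+ 2 + d l ^+ 2) / 2.
  have amgm := leif_mean_square_scaled `|d j| `|d l|.
  rewrite !real_normK ?num_real // in amgm.
  apply: le_trans (ler_norm _) _; rewrite !normrM mulrCA.
  apply: le_trans (ler_wpM2r (mulr_ge0 (normr_ge0 _) (normr_ge0 _)) (ler_mx_l1norm a j l)) _.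
  rewrite -mulrA ler_wpM2l ?mx_l1norm_ge0 //; move: amgm.1; rewrite mulr2n.
  lra.
apply: le_trans (_ : \sum_j \sum_l mx_l1norm a * (d j ^+ 2 + d l ^+ 2) / 2 <= _).
  by apply: ler_sum => j _; rewrite /mxv mulr_sumr; apply: ler_sum => l _; exact: step.
under eq_bigr do rewrite -mulr_suml -mulr_sumr big_split /= sumr_const card_ord.
rewrite -mulr_suml -mulr_sumr big_split /= sumr_const card_ord sumrMnl.
set S := \sum_(i < n) d i ^+ 2; rewrite -[S *+ n]mulr_natl.
by rewrite le_eqVlt; apply/orP; left; apply/eqP; field.
Qed.

Lemma linear_ode_uniq (u1 u2 : R -> 'I_n -> R) :
  (forall t i, is_derive t (1 : R) (fun s => u1 s i) (mxv a (u1 t) i)) ->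
  (forall t i, is_derive t (1 : R) (fun s => u2 s i) (mxv a (u2 t) i)) ->
  (forall i, u1 0 i = u2 0 i) -> forall t, 0 <= t -> forall i, u1 t i = u2 t i.
Proof.
move=> du1 du2 u10 t t_ge0 i.
pose d s j := u1 s j - u2 s j.
have dd s j : is_derive s (1 : R) (fun s => d s j) (mxv a (d s) j).
  apply: is_derive_eq (is_deriveB (du1 s j) (du2 s j)) _.
  by rewrite /mxv -sumrB; apply: eq_bigr => l _; rewrite mulrBr.
pose B := 2 * (n%:R * mx_l1norm a).
pose Q s := \sum_j d s j ^+ 2.
have Q_ge0 s : 0 <= Q s by apply: sumr_ge0 => j _; exact: sqr_ge0.
have dQ s : is_derive s (1 : R) Q (\sum_j 2 * (d s j * mxv a (d s) j)).
  have dsq j : is_derive s (1 : R) (fun s => d s j ^+ 2) (2 * (d s j * mxv a (d s) j)).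
    apply: is_derive_eq (is_deriveX 2 (dd s j)) _.
    by rewrite /= expr1 -scalerA.
  by have := is_derive_sum dsq; rewrite fct_sumE.
(* Gronwall: [E s = e^{-Bs} Q s] is nonincreasing, nonnegative and vanishes at [0]. *)
pose E s := expR (- B * s) * Q s.
pose dE s := expR (- B * s) * \sum_j 2 * (d s j * mxv a (d s) j)
             + Q s * (expR (- B * s) * - B).
have E_derive s : is_derive s (1 : R) E (dE s).
  exact: is_deriveM (is_derive_expR_scale (- B) s) (dQ s).
have dE_le0 s : dE s <= 0.
  rewrite /dE mulrCA -mulrDr; apply: mulr_ge0_le0; first exact: expR_ge0.
  rewrite mulrN subr_le0 -mulr_sumr /B [Q s * _]mulrC -mulrA ler_pM2l //.
  exact: mxv_quad_bound.
have E0 : E 0 = 0.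
  by rewrite /E /Q big1 ?mulr0 // => j _; rewrite /d u10 subrr expr0n.
have E_cont : {within `[0, t], continuous E}.
  by apply: derivable_within_continuous => x _; case: (E_derive x).
have [c _ Ec] := MVT_segment t_ge0 (fun s _ => E_derive s) E_cont.
have Et_le0 : E t <= 0 by move: Ec; rewrite E0 !subr0 => ->; exact: mulr_le0_ge0.
have /eqP Qt : Q t == 0.
  by rewrite eq_le Q_ge0 andbT -(pmulr_rle0 _ (expR_gt0 (- B * t))).
have dt0 : forall j, true -> d t j ^+ 2 = 0.
  by apply: psumr_eq0P Qt => j _; exact: sqr_ge0.
by move/eqP: (dt0 i isT); rewrite sqrf_eq0 subr_eq0 => /eqP.
Qed.

End LinearODE.

Section MarkovSemigroup.
Variables (R : realType) (n : nat) (m : 'I_n -> 'I_n -> R).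
Hypothesis m_row0 : forall i, \sum_j m i j = 0.
Hypothesis m_offdiag_le0 : forall i j, i != j -> m i j <= 0.

Let mN i j := - m i j.
Let c := mx_l1norm m.
Let p i j := (i == j)%:R * c - m i j.

Let p_ge0 i j : 0 <= p i j.
Proof.
rewrite /p; have [->|ij] := eqVneq i j.
  by rewrite mul1r subr_ge0 (le_trans (ler_norm _) (ler_mx_l1norm m j j)).
by rewrite mul0r sub0r oppr_ge0 m_offdiag_le0.
Qed.

Let mxv_p x i : mxv p x i = c * x i - mxv m x i.
Proof.
rewrite /mxv /p; under eq_bigr do rewrite mulrBl.
rewrite sumrB; congr (_ - _).
rewrite (bigD1 i) //= eqxx mul1r big1 ?addr0 // => j /negbTE.
by rewrite eq_sym => ->; rewrite !mul0r.
Qed.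

Let mxv_mN x i : mxv mN x i = - mxv m x i.
Proof. by rewrite /mxv /mN -sumrN; apply: eq_bigr => j _; rewrite mulNr. Qed.

(* [-m = p - c I] with [p >= 0] entrywise, hence [e^{-tm} = e^{-ct} e^{tp}]; both sides
   solve the same linear ODE. *)
Lemma expmvN_shift t x i :
  0 <= t -> expmv mN t x i = expR (- c * t) * expmv p t x i.
Proof.
move=> t_ge0.
apply: (@linear_ode_uniq _ _ mN (fun s => expmv mN s x)
                          (fun s j => expR (- c * s) * expmv p s x j)) => // [s j|s j|j].
- by apply: is_derive_eq (is_derive_expmv mN x j s) _; rewrite expmv_mxv.
- apply: is_derive_eq (is_deriveM (is_derive_expR_scale (- c) s) (is_derive_expmv p x j s)) _.
  rewrite expmv_mxv mxv_p mxv_mN /mxv.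
  under [in RHS]eq_bigr do rewrite mulrCA.
  by rewrite -mulr_sumr /GRing.scale /=; ring.
- by rewrite !expmv0 mulr0 expR0 mul1r.
Qed.

Lemma expmvN_cst1 t i : 0 <= t -> expmv mN t (fun _ => 1) i = 1.
Proof.
move=> t_ge0.
apply: (@linear_ode_uniq _ _ mN (fun s => expmv mN s (fun _ => 1)) (fun _ _ => 1))
  => // [s j|s j|j].
- by apply: is_derive_eq (is_derive_expmv mN _ j s) _; rewrite expmv_mxv.
- apply: is_derive_eq (is_derive_cst (1 : R) s 1) _.
  by rewrite mxv_mN /mxv (eq_bigr _ (fun l _ => mulr1 (m j l))) m_row0 oppr0.
- by rewrite expmv0.
Qed.

Lemma expmvN_ge0 t x i : 0 <= t -> (forall l, 0 <= x l) -> 0 <= expmv mN t x i.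
Proof.
move=> t_ge0 x_ge0; rewrite expmvN_shift // mulr_ge0 ?expR_ge0 //.
exact: expmv_ge0.
Qed.

Lemma expmvN_contraction t y i (Y : R) :
  0 <= t -> (forall j, `|y j| <= Y) -> `|expmv mN t y i| <= Y.
Proof.
move=> t_ge0 y_le.
have [lower upper] :
    (forall l, 0 <= Y * 1 + 1 * y l) /\ (forall l, 0 <= Y * 1 + (-1) * y l).
  by split=> l; have := y_le l; rewrite ler_norml => /andP[]; lra.
have := expmvN_ge0 i t_ge0 lower; have := expmvN_ge0 i t_ge0 upper.
by rewrite ler_norml !expmv_lin2 expmvN_cst1 // => ? ?; apply/andP; split; lra.
Qed.

Lemma expmvN_sub_bound t v i (K : R) :
  0 <= t -> (forall j, `|mxv m v j| <= K) -> `|expmv mN t v i - v i| <= t * K.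
Proof.
move=> t_ge0 mv_le.
have dG s := is_derive_expmv mN v i s.
have G_cont : {within `[0, t], continuous (fun s => expmv mN s v i)}.
  by apply: derivable_within_continuous => s _; case: (dG s).
have [s] := MVT_segment t_ge0 (fun s _ => dG s) G_cont.
rewrite in_itv /= => /andP[s_ge0 _]; rewrite expmv0 subr0 => ->.
rewrite normrM mulrC ger0_norm // ler_wpM2l //.
by apply: expmvN_contraction => // j; rewrite mxv_mN normrN.
Qed.

End MarkovSemigroup.

Definition basisv (R : nzRingType) (n : nat) (j : 'I_n) : 'I_n -> R :=
  fun k => (k == j)%:R.

Section GraphLaplacian.
Variables (R : realType) (n : nat) (w : 'I_n -> 'I_n -> R) (r : R).
Hypothesis w_graph : is_graph w.

Lemma weight_sym i j : w i j = w j i.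
Proof. by case: w_graph => _ []. Qed.

Lemma weight_ge0 i j : 0 <= w i j.
Proof. by case: w_graph => _ [_ []]. Qed.

Lemma deg_gt0 i : 0 < deg w i.
Proof.
case: w_graph => n_ge2 [_ [_ [_ w_conn]]].
have [j ij] : exists j : 'I_n, j != i.
  have n_gt0 : (0 < n)%N by apply: leq_trans n_ge2.
  have [->|i_neq0] := eqVneq i (Ordinal n_gt0); last by exists (Ordinal n_gt0); rewrite eq_sym.
  by exists (Ordinal n_ge2).
have /connectP [[|k p] /= path_ij last_ij] := w_conn i j.
  by rewrite last_ij eqxx in ij.
case/andP: path_ij => w_ik _; apply: lt_le_trans w_ik _.
exact: (ler_psum_term (F := fun j => w i j) k (weight_ge0 i)).
Qed.

Lemma degr_gt0 i : 0 < deg w i `^ r.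
Proof. exact: powR_gt0 (deg_gt0 i). Qed.

Lemma degr_neq0 i : deg w i `^ r != 0.
Proof. by rewrite gt_eqF // degr_gt0. Qed.

Lemma vol_gt0 : 0 < vol r w.
Proof.
case: w_graph => n_ge2 _; have n_gt0 : (0 < n)%N by apply: leq_trans n_ge2.
apply: lt_le_trans (degr_gt0 (Ordinal n_gt0)) _.
exact: (ler_psum_term (F := fun j => deg w j `^ r) _ (fun j => ltW (degr_gt0 j))).
Qed.

Lemma vol_neq0 : vol r w != 0.
Proof. by rewrite gt_eqF // vol_gt0. Qed.

Lemma lap_lincomb (J : finType) (c : J -> R) (f : J -> 'I_n -> R) i :
  lap r w (fun k => \sum_j c j * f j k) i = \sum_j c j * lap r w (f j) i.
Proof.
rewrite /lap.
transitivity (deg w i `^ (- r) * \sum_k \sum_j c j * (w i k * (f j i - f j k))).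
  congr (_ * _); apply: eq_bigr => k _; rewrite -sumrB mulr_sumr.
  by apply: eq_bigr => j _; ring.
by rewrite exchange_big mulr_sumr; apply: eq_bigr => j _; rewrite -mulr_sumr; ring.
Qed.

Lemma mass_lincomb (J : finType) (c : J -> R) (f : J -> 'I_n -> R) :
  mass r w (fun k => \sum_j c j * f j k) = \sum_j c j * mass r w (f j).
Proof.
rewrite /mass (eq_bigr (fun k => \sum_j c j * (deg w k `^ r * f j k))); last first.
  by move=> k _; rewrite mulr_sumr; apply: eq_bigr => j _; ring.
by rewrite exchange_big; apply: eq_bigr => j _; rewrite mulr_sumr.
Qed.

Lemma lap_lin2 (c1 c2 : R) f g i :
  lap r w (fun k => c1 * f k + c2 * g k) i = c1 * lap r w f i + c2 * lap r w g i.
Proof.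
have := lap_lincomb (fun b : bool => if b then c1 else c2) (fun b => if b then f else g) i.
by rewrite big_bool /= => <-; congr (lap r w _ i); apply/funext => l; rewrite big_bool.
Qed.

Lemma mass_lin2 (c1 c2 : R) f g :
  mass r w (fun k => c1 * f k + c2 * g k) = c1 * mass r w f + c2 * mass r w g.
Proof.
have := mass_lincomb (fun b : bool => if b then c1 else c2) (fun b => if b then f else g).
by rewrite big_bool /= => <-; congr (mass r w _); apply/funext => l; rewrite big_bool.
Qed.

Lemma lap_cst (c : R) i : lap r w (fun _ => c) i = 0.
Proof. by rewrite /lap big1 ?mulr0 // => k _; rewrite subrr mulr0. Qed.

Lemma mass_cst (c : R) : mass r w (fun _ => c) = c * vol r w.
Proof. by rewrite /mass /vol mulr_sumr; apply: eq_bigr => k _; rewrite mulrC. Qed.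

Lemma lap_affine (c1 c2 : R) f i : lap r w (fun k => c1 * f k + c2) i = c1 * lap r w f i.
Proof.
have := lap_lin2 c1 c2 f (fun _ => 1) i; rewrite lap_cst mulr0 addr0 => <-.
by congr (lap r w _ i); apply/funext => k; rewrite mulr1.
Qed.

Lemma mass_affine (c1 c2 : R) f :
  mass r w (fun k => c1 * f k + c2) = c1 * mass r w f + c2 * vol r w.
Proof.
have := mass_lin2 c1 c2 f (fun _ => 1); rewrite mass_cst mul1r => <-.
by congr (mass r w _); apply/funext => k; rewrite mulr1.
Qed.

(* The [d_i^r] weights in [mass] cancel the [d_i^{-r}] in [lap], and [w] is symmetric. *)
Lemma mass_lap u : mass r w (lap r w u) = 0.
Proof.
rewrite /mass /lap.
transitivity (\sum_i \sum_j w i j * u i - \sum_i \sum_j w i j * u j).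
  rewrite -sumrB; apply: eq_bigr => i _.
  rewrite mulrA powRN mulfV ?degr_neq0 // mul1r -sumrB.
  by apply: eq_bigr => j _; rewrite mulrBr.
rewrite [X in _ - X]exchange_big /=; apply/eqP; rewrite subr_eq0; apply/eqP.
by apply: eq_bigr => i _; apply: eq_bigr => j _; rewrite weight_sym.
Qed.

Lemma mass_lap_add_cst u (c : R) : mass r w (fun j => lap r w u j + c) = c * vol r w.
Proof.
have := mass_lin2 1 c (lap r w u) (fun _ => 1).
rewrite mass_lap mass_cst mulr0 add0r mul1r => <-.
by congr (mass r w _); apply/funext => k; rewrite mul1r mulr1.
Qed.

(* Dirichlet energy: [sum_i u_i (lap u)_i d_i^r = 1/2 sum_{i,j} w_ij (u_i - u_j)^2]. *)
Lemma lap_eq0_edge u : (forall i, lap r w u i = 0) -> forall i j, 0 < w i j -> u i = u j.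
Proof.
move=> lap_u0.
have row0 i : \sum_j w i j * (u i - u j) = 0.
  move/eqP: (lap_u0 i); rewrite /lap mulf_eq0 powRN invr_eq0 (negbTE (degr_neq0 i)) /=.
  by move/eqP.
pose F i j := w i j * (u i - u j) ^+ 2.
have F_ge0 i j : 0 <= F i j by rewrite mulr_ge0 ?weight_ge0 ?sqr_ge0.
have half0 : \sum_i \sum_j w i j * u i * (u i - u j) = 0.
  rewrite big1 // => i _; transitivity (u i * \sum_j w i j * (u i - u j)).
    by rewrite mulr_sumr; apply: eq_bigr => j _; ring.
  by rewrite row0 mulr0.
have energy0 : \sum_i \sum_j F i j = 0.
  transitivity (\sum_i \sum_j w i j * u i * (u i - u j)
                + \sum_j \sum_i w i j * u i * (u i - u j)).
    rewrite -big_split /=; apply: eq_bigr => i _.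
    by rewrite -big_split /=; apply: eq_bigr => j _; rewrite /F weight_sym; ring.
  by rewrite [X in _ + X]exchange_big /= half0 addr0.
have rowF0 : forall i, true -> \sum_j F i j = 0.
  by apply: psumr_eq0P energy0 => i _; exact: sumr_ge0.
have F0 i : forall j, true -> F i j = 0 by apply: psumr_eq0P (rowF0 i isT) => j _.
move=> i j w_ij; move/eqP: (F0 i j isT).
by rewrite mulf_eq0 (gt_eqF w_ij) sqrf_eq0 subr_eq0 => /eqP.
Qed.

Lemma lap_eq0_const u : (forall i, lap r w u i = 0) -> forall i j, u i = u j.
Proof.
move=> lap_u0 i j; case: w_graph => _ [_ [_ [_ w_conn]]].
have /connectP [p path_ij ->] := w_conn i j.
elim: p i path_ij => [|k p IH] i //= /andP[w_ik path_kj].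
by rewrite (lap_eq0_edge lap_u0 w_ik) (IH k path_kj).
Qed.

Lemma lap_mass_eq0 u : (forall i, lap r w u i = 0) -> mass r w u = 0 -> forall i, u i = 0.
Proof.
move=> lap_u0 mass_u0 i.
have u_cst : u = fun _ => u i by apply/funext => j; exact: lap_eq0_const.
move/eqP: mass_u0; rewrite u_cst mass_cst mulf_eq0 (negbTE vol_neq0) orbF.
by move/eqP.
Qed.

(* The matrix, acting on row vectors, of the injective map [u |-> lap u + mass(u) chi_V]. *)
Definition poisson_mx : 'M[R]_n := \matrix_(i, j) (lap r w (basisv R i) j + deg w i `^ r).

Lemma poisson_mxE (x : 'rV[R]_n) j :
  (x *m poisson_mx) 0 j = lap r w (fun k => x 0 k) j + mass r w (fun k => x 0 k).
Proof.
rewrite mxE; under eq_bigr do rewrite mxE mulrDr.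
rewrite big_split /=; congr (_ + _).
  rewrite -lap_lincomb; congr (lap r w _ j); apply/funext => k.
  by rewrite /basisv; under eq_bigr do rewrite eq_sym; rewrite sumr_delta.
by rewrite /mass; apply: eq_bigr => i _; rewrite mulrC.
Qed.

Lemma mass_eq0_poisson (b : 'I_n -> R) p :
  (forall j, lap r w p j + mass r w p = b j) -> mass r w b = 0 -> mass r w p = 0.
Proof.
move=> pE mass_b0.
have := mass_lap_add_cst p (mass r w p).
rewrite (_ : (fun j => _) = b) ?mass_b0; last by apply/funext => j; rewrite pE.
by move/esym/eqP; rewrite mulf_eq0 (negbTE vol_neq0) orbF => /eqP.
Qed.

Lemma poisson_mx_unit : poisson_mx \in unitmx.
Proof.
rewrite -row_free_unit -kermx_eq0; apply/eqP/row_matrixP => i; rewrite row0.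
set x := row i (kermx poisson_mx).
have x_ker : x *m poisson_mx = 0 by rewrite -row_mul mulmx_ker row0.
have xE j : lap r w (fun k => x 0 k) j + mass r w (fun k => x 0 k) = 0.
  by rewrite -poisson_mxE x_ker mxE.
have mass_x0 : mass r w (fun k => x 0 k) = 0.
  by apply: (mass_eq0_poisson xE); rewrite mass_cst mul0r.
have lap_x0 j : lap r w (fun k => x 0 k) j = 0 by rewrite -(xE j) mass_x0 addr0.
apply/rowP => k; move: (lap_mass_eq0 lap_x0 mass_x0 k).
by rewrite /x !mxE.
Qed.

Lemma poisson_solvable b : mass r w b = 0 -> exists p, lap r w p = b /\ mass r w p = 0.
Proof.
move=> mass_b0.
pose x := (\row_j b j) *m invmx poisson_mx.
have xE j : lap r w (fun k => x 0 k) j + mass r w (fun k => x 0 k) = b j.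
  by rewrite -poisson_mxE mulmxKV ?poisson_mx_unit // mxE.
have mass_x0 := mass_eq0_poisson xE mass_b0.
by exists (fun k => x 0 k); split => //; apply/funext => j; rewrite -xE mass_x0 addr0.
Qed.

End GraphLaplacian.

Section OKMBOOperator.
Variables (R : realType) (n : nat) (w : 'I_n -> 'I_n -> R) (r gamma : R).
Hypothesis w_graph : is_graph w.

Lemma mass_sub_avg u : mass r w (fun i => u i - avg r w u i) = 0.
Proof.
have := mass_affine w r 1 (- (mass r w u / vol r w)) u.
rewrite mul1r mulNr divfK ?vol_neq0 // subrr.
by rewrite /avg; under eq_fun do rewrite mul1r.
Qed.

Lemma phi_spec u :
  lap r w (phi r w u) = (fun i => u i - avg r w u i) /\ mass r w (phi r w u) = 0.
Proof. exact: xgetPex (poisson_solvable w_graph (mass_sub_avg u)). Qed.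

Lemma phi_uniq u p :
  lap r w p = (fun i => u i - avg r w u i) -> mass r w p = 0 -> p = phi r w u.
Proof.
move=> lap_p mass_p; have [lap_phi mass_phi] := phi_spec u.
have lap_d0 j : lap r w (fun k => 1 * p k + (-1) * phi r w u k) j = 0.
  by rewrite lap_lin2 lap_p lap_phi /=; ring.
have mass_d0 : mass r w (fun k => 1 * p k + (-1) * phi r w u k) = 0.
  by rewrite mass_lin2 mass_p mass_phi; ring.
apply/funext => i; apply/eqP; rewrite -subr_eq0; apply/eqP.
by have := lap_mass_eq0 w_graph lap_d0 mass_d0 i; rewrite mul1r mulN1r.
Qed.

Lemma phi_lincomb (J : finType) (c : J -> R) (f : J -> 'I_n -> R) :
  phi r w (fun k => \sum_j c j * f j k) = fun k => \sum_j c j * phi r w (f j) k.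
Proof.
apply/esym/phi_uniq.
  apply/funext => i; rewrite lap_lincomb.
  under eq_bigr do rewrite (phi_spec (f _)).1.
  by rewrite /avg mass_lincomb mulr_suml -sumrB; apply: eq_bigr => j _; ring.
by rewrite mass_lincomb big1 // => j _; rewrite (phi_spec (f j)).2 mulr0.
Qed.

Lemma phi_cst1 : phi r w (fun _ => 1) = fun _ => 0.
Proof.
apply/esym/phi_uniq; last by rewrite mass_cst mul0r.
by apply/funext => i; rewrite lap_cst /avg mass_cst mul1r divff ?subrr ?vol_neq0.
Qed.

Lemma Lop_lincomb (J : finType) (c : J -> R) (f : J -> 'I_n -> R) i :
  Lop r gamma w (fun k => \sum_j c j * f j k) i = \sum_j c j * Lop r gamma w (f j) i.
Proof.
rewrite /Lop lap_lincomb phi_lincomb mulr_sumr -big_split /=.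
by apply: eq_bigr => j _; ring.
Qed.

Definition Lmx i j : R := Lop r gamma w (basisv R j) i.

Lemma Lop_mxv u : Lop r gamma w u = mxv Lmx u.
Proof.
apply/funext => i.
have uE : u = fun k => \sum_j u j * basisv R j k.
  by apply/funext => k; rewrite /basisv; under eq_bigr do rewrite eq_sym; rewrite sumr_delta.
by rewrite {1}uE Lop_lincomb /mxv; apply: eq_bigr => j _; rewrite mulrC.
Qed.

Lemma Lmx_row0 i : \sum_j Lmx i j = 0.
Proof.
have -> : \sum_j Lmx i j = Lop r gamma w (fun k => \sum_j 1 * basisv R j k) i.
  by rewrite Lop_lincomb; apply: eq_bigr => j _; rewrite mul1r.
have -> : (fun k : 'I_n => \sum_j 1 * basisv R j k) = fun _ => 1.
  apply/funext => k; rewrite -[RHS](sumr_delta (fun _ => 1 : R) k).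
  by apply: eq_bigr => j _; rewrite /basisv eq_sym mul1r.
by rewrite /Lop lap_cst phi_cst1 mulr0 addr0.
Qed.

Lemma lap_basisv j i : i != j -> lap r w (basisv R j) i = - (deg w i `^ (- r) * w i j).
Proof.
move=> ij; rewrite /lap /basisv (negbTE ij) -mulrN; congr (_ * _).
rewrite -(sumr_delta (w i) j) -sumrN; apply: eq_bigr => k _.
by rewrite sub0r mulrN.
Qed.

Lemma mass_basisv j : mass r w (basisv R j) = deg w j `^ r.
Proof. exact: sumr_delta. Qed.

Let nu j := eqmeas r w (~: [set j]).

(* [lap (phi (basisv j)) = basisv j - d_j^r / vol(V)] is constant off [j], so a rescaling of
   [phi (basisv j) j - phi (basisv j)] is the equilibrium measure of [V \ {j}]. *)
Lemma eqmeas_spec j :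
  (forall i, i \in ~: [set j] -> lap r w (nu j) i = 1) /\
  (forall i, i \notin ~: [set j] -> nu j i = 0).
Proof.
have nu_ex : exists v, (forall i, i \in ~: [set j] -> lap r w v i = 1) /\
                       (forall i, i \notin ~: [set j] -> v i = 0).
  pose c := vol r w / deg w j `^ r.
  exists (fun k => - c * phi r w (basisv R j) k + c * phi r w (basisv R j) j); split => i.
    rewrite in_setC1 => ij.
    rewrite lap_affine (phi_spec _).1 /avg mass_basisv /basisv (negbTE ij) /c.
    by rewrite /= sub0r; field; rewrite degr_neq0 ?vol_neq0.
  by rewrite in_setC1 negbK => /eqP ->; ring.
exact: xgetPex nu_ex.
Qed.

Lemma lap_eqmeas j i : lap r w (nu j) i = 1 - vol r w / deg w j `^ r * (i == j)%:R.
Proof.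
have [nu_in _] := eqmeas_spec j.
have [->|ij] := eqVneq i j; last by rewrite mulr0 subr0 nu_in // in_setC1.
have := mass_lap r w_graph (nu j); rewrite /mass (bigD1 j) //=.
rewrite (eq_bigr (fun k => deg w k `^ r)) => [mass0|k kj]; last first.
  by rewrite nu_in ?mulr1 // in_setC1.
rewrite /vol (bigD1 j) //=; set A := \sum_(k | k != j) _ in mass0 *.
have dj_neq0 := degr_neq0 r w_graph j.
have -> : lap r w (nu j) j = - A / deg w j `^ r.
  apply: (mulfI dj_neq0); rewrite [RHS]mulrC divfK //.
  by apply/eqP; rewrite -addr_eq0 mass0.
by field.
Qed.

Lemma phi_basisv j :
  phi r w (basisv R j) = fun k => - (deg w j `^ r / vol r w) * fj r w j k.
Proof.
have dj_neq0 := degr_neq0 r w_graph j; have vol_neq0 := vol_neq0 r w_graph.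
set c := - (deg w j `^ r / vol r w).
have fjE : (fun k => c * fj r w j k) =
           fun k => c * nu j k + - c * (mass r w (nu j) / vol r w).
  by apply/funext => k; rewrite /fj /avg -/(nu j); ring.
apply/esym/phi_uniq; rewrite fjE.
  apply/funext => i; rewrite lap_affine lap_eqmeas /avg mass_basisv /basisv /c.
  by case: (i == j); rewrite /=; field; rewrite ?dj_neq0 ?vol_neq0.
by rewrite mass_affine /c; field; rewrite ?dj_neq0 ?vol_neq0.
Qed.

Lemma Lmx_offdiag i j : i != j ->
  Lmx i j = - (deg w i `^ (- r) * w i j + gamma * (deg w j `^ r / vol r w) * fj r w j i).
Proof. by move=> ij; rewrite /Lmx /Lop lap_basisv // phi_basisv; ring. Qed.

Lemma Lmx_offdiag_le0 : 0 <= gamma -> inC r gamma w -> forall i j, i != j -> Lmx i j <= 0.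
Proof.
move=> gamma_ge0 w_C i j ij; rewrite Lmx_offdiag // oppr_le0.
have dj_vol_ge0 : 0 <= deg w j `^ r / vol r w.
  by rewrite divr_ge0 ?powR_ge0 // ltW // vol_gt0.
move: w_C; rewrite /inC; case: eqP => [-> _ | _ [w_C0 w_C]].
  by rewrite !mul0r addr0 mulr_ge0 ?powR_ge0 ?weight_ge0.
have [w_ij0|] := w_C j i ij; last exact: ltW.
rewrite w_ij0 mulr0 add0r.
have [|fj_ge0] := w_C0 j i ij; first by rewrite w_ij0 ltxx.
by rewrite mulr_ge0 // mulr_ge0.
Qed.

Lemma expL_sub_bound t u i : 0 <= gamma -> inC r gamma w -> 0 <= t ->
  `|expL r gamma w t u i - u i| <= t * supnorm (Lop r gamma w u).
Proof.
move=> gamma_ge0 w_C t_ge0.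
have LopE : Lop r gamma w = mxv Lmx by apply/funext => v; rewrite Lop_mxv.
rewrite /expL /supnorm LopE expmv_oppE; apply: expmvN_sub_bound => //.
- exact: Lmx_row0.
- exact: Lmx_offdiag_le0.
- by move=> j; exact: (@le_bigmax _ _ _ 0 (fun j => `|mxv Lmx u j|) j).
Qed.

End OKMBOOperator.

Lemma supnorm_ge0 (R : realType) (n : nat) (u : 'I_n -> R) : 0 <= supnorm u.
Proof.
by apply: (big_ind (fun x : R => 0 <= x)) => // x y x_ge0 _; rewrite le_max x_ge0.
Qed.

Lemma tau_kappa_lt_half (R : realType) (n : nat) (w : 'I_n -> 'I_n -> R) (r gamma : R)
    (S : {set 'I_n}) (t : R) :
  (t%:E < tau_kappa r gamma w S)%E -> t * supnorm (Lop r gamma w (chi R S)) < 2^-1.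
Proof.
rewrite /tau_kappa; have := supnorm_ge0 (Lop r gamma w (chi R S)).
set K := supnorm _ => K_ge0.
case: eqP => [-> _|/eqP K_neq0]; first by rewrite mulr0 invr_gt0.
rewrite lte_fin => t_lt; have K_gt0 : 0 < K by rewrite lt_def K_neq0.
apply: lt_le_trans (_ : (2 * K)^-1 * K <= _); first by rewrite ltr_pM2r.
by rewrite invfM -mulrA mulVf ?mulr1.
Qed.

Lemma threshold_chi (R : realType) (n : nat) (S : {set 'I_n}) (y : 'I_n -> R) :
  (forall i, `|y i - chi R S i| < 2^-1) -> [set i | 2^-1 <= y i]%SET = S.
Proof.
move=> y_near; apply/setP => i; rewrite inE.
have := y_near i; rewrite /chi ltr_norml; case: (i \in S) => /andP[lo hi].
  by apply/idP; lra.
by apply/negbTE; rewrite -ltNge; lra.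
Qed.

Theorem lemma6p30 (R : realType) (n : nat) (w : 'I_n -> 'I_n -> R)
  (r gamma : R) (S : {set 'I_n}) (tau : R) :
  0 <= r <= 1 ->
  0 <= gamma ->
  is_graph w ->
  inC r gamma w ->
  S != finset.set0 ->
  0 <= tau ->
  (tau%:E < tau_kappa r gamma w S)%E ->
  finset (fun i : 'I_n => 2^-1 <= expL r gamma w tau (chi R S) i) = S.
Proof.
move=> _ gamma_ge0 w_graph w_C _ tau_ge0 tau_lt.
apply: threshold_chi => i.
apply: le_lt_trans (expL_sub_bound w_graph _ i gamma_ge0 w_C tau_ge0) _.
exact: tau_kappa_lt_half tau_lt.
Qed.
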